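(* Let $e_1,\dots,e_k\in\mathbb{C}^{n\times n}$ be an irreducible anticommuting family. Then every $e_i$ is either invertible or nilpotent. Moreover: (1) for every $i\in[k]$ there is $\lambda_i\in\mathbb{C}$ with $\mathrm{spec}(e_i)\subseteq\{\lambda_i,-\lambda_i\}$; (2) if at least two of the matrices $e_1,\dots,e_k$ are invertible, then $n$ is even and for every invertible $e_i$ the algebraic multiplicity of $\lambda_i$ as an eigenvalue of $e_i$ is exactly $n/2$.
   Context: A family $e_1,\dots,e_k$ of complex $n\times n$ matrices is called anticommuting if $e_ie_j=-e_je_i$ for all distinct $i,j\in[k]=\{1,\dots,k\}$. For $X_1\in\mathbb{C}^{r_1\times r_1}$, $X_2\in\mathbb{C}^{r_2\times r_2}$, $X_1\oplus X_2$ denotes the block-diagonal matrix $\begin{pmatrix}X_1&0\\0&X_2\end{pmatrix}$. A family $e_1,\dots,e_k\in\mathbb{C}^{n\times n}$ is reducible if there exist an invertible $V\in\mathbb{C}^{n\times n}$ and integers $0<r_1<n$, $r_2=n-r_1$, and matrices $e_i(1)\in\mathbb{C}^{r_1\times r_1}$, $e_i(2)\in\mathbb{C}^{r_2\times r_2}$ such that $Ve_iV^{-1}=e_i(1)\oplus e_i(2)$ for all $i\in[k]$; otherwise it is irreducible. $\mathrm{spec}(X)$ is the set of eigenvalues of $X$. *)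

From HB Require Import structures.
From mathcomp Require Import all_boot all_order all_algebra all_field.
Set Implicit Arguments. Unset Strict Implicit. Unset Printing Implicit Defensive.
Import GRing.Theory Num.Theory.
Local Open Scope ring_scope.

(* Complex numbers are modelled by algC (algebraic closure of Q with a
   conjugation); all statements below are purely algebraic. *)

Definition anticommuting (n k : nat) (e : 'I_k -> 'M[algC]_n) : Prop :=
  forall i j : 'I_k, i != j -> e i *m e j = - (e j *m e i).

Definition reducible (n k : nat) (e : 'I_k -> 'M[algC]_n) : Prop :=
  exists (r1 r2 : nat) (Hr : (r1 + r2)%N = n),
    (0 < r1)%N /\ (r1 < n)%N /\
    exists V : 'M[algC]_n, V \in unitmx /\
      forall i : 'I_k, exists (A : 'M[algC]_r1) (B : 'M[algC]_r2),
        V *m e i *m invmx V = castmx (Hr, Hr) (block_mx A 0 0 B).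

Definition irreducible_family (n k : nat) (e : 'I_k -> 'M[algC]_n) : Prop :=
  ~ reducible e.

Definition nilpotent_mx (n : nat) (A : 'M[algC]_n) : Prop :=
  exists m : nat, A ^+ m = 0.

From HB Require Import structures.
From mathcomp Require Import all_boot all_order all_algebra all_field.
Set Implicit Arguments. Unset Strict Implicit. Unset Printing Implicit Defensive.
Import GRing.Theory Num.Theory.
Local Open Scope ring_scope.

(* The square of each e_i commutes with every e_j, so by irreducibility it has
   a single eigenvalue mu_i: two distinct eigenvalues would split the space into
   the kernels of two coprime factors of its characteristic polynomial, a pair
   of complementary invariant subspaces.  Hence spec(e_i) lies in
   {sqrt mu_i, -sqrt mu_i}, and e_i is nilpotent if mu_i = 0, invertible
   otherwise.  An invertible e_j conjugates e_i to -e_i for i <> j, so e_i is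
   traceless; for invertible e_i this forces the eigenvalues sqrt mu_i and
   -sqrt mu_i to occur equally often. *)

Lemma eigenspace_sub_kermxpoly (F : fieldType) n (M : 'M[F]_n) p a :
  root p a -> (eigenspace M a <= kermxpoly M p)%MS.
Proof.
case: n M => [|n'] M; first by rewrite thinmx0 sub0mx.
move=> /factor_theorem [q ->]; rewrite eigenspace_poly /kermxpoly mulrC rmorphM.
by apply/sub_kermxP; rewrite mulmxE mulrA -mulmxE mulmx_ker mul0mx.
Qed.

Section LinearAlgebra.

Variable C : numClosedFieldType.

Lemma char_poly_split n (M : 'M[C]_n) :
  exists r : seq C, char_poly M = \prod_(z <- r) ('X - z%:P).
Proof.
have [r Hr] := closed_field_poly_normal (char_poly M).
by exists r; rewrite Hr (monicP (char_poly_monic M)) scale1r.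
Qed.

Lemma unitmx_sub_scalarE n (M : 'M[C]_n) c :
  (M - c%:M \in unitmx) = ~~ eigenvalue M c.
Proof. by rewrite /eigenvalue /eigenspace -row_free_unit -kermx_eq0 negbK. Qed.

Lemma eigenvalue_mulmx_sqr n (A : 'M[C]_n) a :
  eigenvalue A a -> eigenvalue (A *m A) (a ^+ 2).
Proof.
move/eigenvalueP => [v Av v0]; apply/eigenvalueP; exists v => //.
by rewrite mulmxA Av -scalemxAl Av scalerA expr2.
Qed.

Lemma eigenvalue_sqrtC n (A : 'M[C]_n) mu :
  (forall c, eigenvalue (A *m A) c -> c = mu) ->
  forall a, eigenvalue A a -> a = sqrtC mu \/ a = - sqrtC mu.
Proof.
move=> Hmu a /eigenvalue_mulmx_sqr/Hmu a2.
have : a ^+ 2 == sqrtC mu ^+ 2 by rewrite sqrtCK a2.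
by rewrite eqf_sqr => /orP [/eqP -> | /eqP ->]; [left | right].
Qed.

Lemma single_eigenvalue_nilpotent n (M : 'M[C]_n) mu :
  (forall c, eigenvalue M c -> c = mu) -> (M - mu%:M) ^+ n = 0.
Proof.
case: n M => [|n'] M Hmu; first by rewrite thinmx0.
have [r Hr] := char_poly_split M.
have size_r : size r = n'.+1.
  by have := size_char_poly M; rewrite Hr size_prod_XsubC => -[].
have r_mu z : z \in r -> z = mu.
  by move=> zr; apply: Hmu; rewrite eigenvalue_root_char Hr root_prod_XsubC.
have : char_poly M = ('X - mu%:P) ^+ n'.+1.
  rewrite Hr -size_r (eq_big_seq (fun=> 'X - mu%:P)); last by move=> z /r_mu ->.
  by rewrite big_const_seq count_predT -Monoid.iteropE.
move/(congr1 (horner_mx M)); rewrite Cayley_Hamilton rmorphXn /= rmorphB /=.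
by rewrite horner_mx_X horner_mx_C => ->.
Qed.

Lemma mxtrace_anticomm_unit n (A B : 'M[C]_n) :
  B \in unitmx -> A *m B = - (B *m A) -> \tr A = 0.
Proof.
move=> UB AB.
have conjA : B *m A *m invmx B = - A by rewrite -[B *m A]opprK -AB mulNmx mulmxK.
apply/eqP; rewrite -eqNr -raddfN /= -conjA -mulmxA mxtrace_mulC mulmxKV //.
Qed.

Lemma count_pm_seq (r : seq C) lam : lam != 0 ->
  (forall z, z \in r -> z = lam \/ z = - lam) ->
  (count_mem lam r + count_mem (- lam) r = size r)%N /\
  \sum_(z <- r) z = (count_mem lam r)%:R * lam - (count_mem (- lam) r)%:R * lam.
Proof.
move=> lam0; elim: r => [|z r IH] r_pm; first by rewrite big_nil mul0r subrr.
have [IH1 IH2] := IH (fun y yr => r_pm y (mem_behead (s := z :: r) yr)).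
have lamN : (lam == - lam) = false by apply/negbTE; rewrite eq_sym eqNr.
rewrite big_cons /=; case: (r_pm z (mem_head z r)) => ->.
- rewrite eqxx lamN add0n add1n; split; first by rewrite -IH1.
  by rewrite IH2 mulrS mulrDl mul1r addrA.
- rewrite eq_sym lamN eqxx add0n add1n; split; first by rewrite -IH1 addnS.
  by rewrite IH2 mulrS mulrDl mul1r opprD addrCA.
Qed.

Lemma size_pm_seq_sum0 (r : seq C) lam :
  (forall z, z \in r -> z != 0 /\ (z = lam \/ z = - lam)) ->
  \sum_(z <- r) z = 0 -> size r = (count_mem lam r).*2.
Proof.
case: r => [//|z0 r0] r_pm; set r := z0 :: r0.
have lam0 : lam != 0.
  have [z00 z0_pm] := r_pm z0 (mem_head z0 r0).
  by apply: contraNneq z00 => lam_eq0; case: z0_pm => ->; rewrite lam_eq0 ?oppr0.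
have [size_r sum_r] := count_pm_seq lam0 (fun z zr => (r_pm z zr).2).
rewrite sum_r -mulrBl => /eqP; rewrite mulf_eq0 (negbTE lam0) orbF subr_eq0.
by rewrite eqr_nat => /eqP count_eq; rewrite -size_r -count_eq addnn.
Qed.

Lemma traceless_pm_spectrum_mup n (A : 'M[C]_n) lam :
  A \in unitmx -> \tr A = 0 ->
  (forall a, eigenvalue A a -> a = lam \/ a = - lam) ->
  n = (mup lam (char_poly A)).*2.
Proof.
move=> UA trA A_pm; have [r Hr] := char_poly_split A.
have size_r : size r = n.
  by have := size_char_poly A; rewrite Hr size_prod_XsubC => -[].
rewrite Hr mu_prod_XsubC -size_r; apply: size_pm_seq_sum0.
  move=> z; rewrite -root_prod_XsubC -Hr -eigenvalue_root_char => Ez.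
  split; last exact: A_pm.
  by apply: contraTneq Ez => ->; rewrite -unitmx_sub_scalarE raddf0 subr0.
case: n A UA trA A_pm Hr size_r => [|n'] A _ trA _ Hr size_r.
  by case: r Hr size_r => // _ _; rewrite big_nil.
apply/eqP; rewrite -oppr_eq0 -coefPn_prod_XsubC ?size_r // -Hr.
by rewrite char_poly_trace // trA oppr0.
Qed.

End LinearAlgebra.

Section Reducibility.

Variable k : nat.

Lemma stable_rows_block_diag n r1 r2 (Hr : (r1 + r2)%N = n) (e : 'I_k -> 'M[algC]_n)
    (V1 : 'M[algC]_(r1, n)) (V2 : 'M[algC]_(r2, n)) :
  row_full (col_mx V1 V2) ->
  (forall i, stablemx V1 (e i)) -> (forall i, stablemx V2 (e i)) ->
  exists V : 'M[algC]_n, V \in unitmx /\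
    forall i, exists (A : 'M[algC]_r1) (B : 'M[algC]_r2),
      V *m e i *m invmx V = castmx (Hr, Hr) (block_mx A 0 0 B).
Proof.
case: n / Hr e V1 V2 => e V1 V2 V_full V1e V2e.
exists (col_mx V1 V2); rewrite -row_full_unit; split=> // i.
have [A HA] := submxP (V1e i); have [B HB] := submxP (V2e i).
exists A, B; rewrite castmx_id mul_col_mx HA HB.
have -> : col_mx (A *m V1) (B *m V2) = block_mx A 0 0 B *m col_mx V1 V2.
  by rewrite mul_block_col !mul0mx addr0 add0r.
by rewrite mulmxK // -row_full_unit.
Qed.

Lemma reducible_of_stable_direct_sum n (e : 'I_k -> 'M[algC]_n) (U W : 'M[algC]_n) :
  U != 0 -> W != 0 -> (U :&: W = 0)%MS -> (U + W :=: 1%:M)%MS ->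
  (forall i, stablemx U (e i)) -> (forall i, stablemx W (e i)) ->
  reducible e.
Proof.
move=> U0 W0 UW0 UW1 Ue We.
have Hr : (\rank U + \rank W)%N = n.
  by rewrite -mxrank_disjoint_sum // UW1 mxrank1.
have rW : (0 < \rank W)%N by rewrite lt0n mxrank_eq0.
exists (\rank U), (\rank W), Hr; split; first by rewrite lt0n mxrank_eq0.
split; first by rewrite -[X in (_ < X)%N]Hr -[X in (X < _)%N]addn0 ltn_add2l.
apply: (@stable_rows_block_diag _ _ _ Hr e (row_base U) (row_base W)).
- by rewrite -sub1mx -addsmxE (adds_eqmx (eq_row_base U) (eq_row_base W)) UW1.
- by move=> i; rewrite stablemx_row_base.
- by move=> i; rewrite stablemx_row_base.
Qed.

Lemma reducible_of_commuting_distinct_eigenvalues n (e : 'I_k -> 'M[algC]_n)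
    (M : 'M[algC]_n) a b :
  (forall j, comm_mx M (e j)) -> eigenvalue M a -> eigenvalue M b -> a != b ->
  reducible e.
Proof.
case: n e M => [|n'] e M Me Ea Eb ab; first by rewrite /eigenvalue thinmx0 eqxx in Ea.
have [r Hr] := char_poly_split M.
pose f := \prod_(z <- r | z == a) ('X - z%:P).
pose g := \prod_(z <- r | z != a) ('X - z%:P).
have root_f c : root f c = (c \in r) && (c == a).
  by rewrite /f -big_filter root_prod_XsubC mem_filter andbC.
have root_g c : root g c = (c \in r) && (c != a).
  by rewrite /g -big_filter root_prod_XsubC mem_filter andbC.
have in_r c : eigenvalue M c -> c \in r.
  by rewrite eigenvalue_root_char Hr root_prod_XsubC.
have fg : char_poly M = f * g by rewrite Hr (bigID (pred1 a)).
have cfg : coprimep f g.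
  apply: Pdiv.ClosedField.root_coprimep => c; rewrite root_f -rootE root_g.
  by case/andP=> _ /eqP ->; rewrite eqxx andbF.
have eigen_sub c p : eigenvalue M c -> root p c -> kermxpoly M p != 0.
  move=> Ec pc; apply: contraTneq Ec => p0.
  by rewrite /eigenvalue /= negbK -submx0 -p0 eigenspace_sub_kermxpoly.
apply: (@reducible_of_stable_direct_sum _ e (kermxpoly M f) (kermxpoly M g)).
- by apply: (eigen_sub a f Ea); rewrite root_f (in_r _ Ea) eqxx.
- by apply: (eigen_sub b g Eb); rewrite root_g (in_r _ Eb) eq_sym.
- exact: mxdirect_kermxpoly.
- apply: eqmx_trans (eqmx_sym (kermxpolyM M cfg)) _.
  by apply: kermxpoly_min; rewrite -fg mxminpoly_dvd_char.
- by move=> i; apply: comm_mx_stable_kermxpoly.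
- by move=> i; apply: comm_mx_stable_kermxpoly.
Qed.

Lemma commuting_mx_single_eigenvalue n (e : 'I_k -> 'M[algC]_n) (M : 'M[algC]_n) :
  irreducible_family e -> (forall j, comm_mx M (e j)) ->
  exists mu, forall c, eigenvalue M c -> c = mu.
Proof.
case: n e M => [|n'] e M irr Me.
  by exists 0 => c; rewrite /eigenvalue thinmx0 eqxx.
have [a Ea] := eigenvalue_closed M (ltn0Sn n').
exists a => c Ec; apply/eqP; apply: contraT => ca; case: irr.
exact: reducible_of_commuting_distinct_eigenvalues Me Ec Ea ca.
Qed.

End Reducibility.

Lemma anticommuting_sqr_comm n k (e : 'I_k -> 'M[algC]_n) :
  anticommuting e -> forall i j, comm_mx (e i *m e i) (e j).
Proof.
move=> ac i j; rewrite /comm_mx; have [<-|ij] := eqVneq i j; first by rewrite mulmxA.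
by rewrite -mulmxA (ac _ _ ij) mulmxN !mulmxA (ac j i) 1?eq_sym // mulNmx.
Qed.

Lemma unitmx_or_nilpotent_of_sqr n (A : 'M[algC]_n) mu :
  (forall c, eigenvalue (A *m A) c -> c = mu) -> A \in unitmx \/ nilpotent_mx A.
Proof.
move=> Hmu; have [mu0 | mu_neq0] := eqVneq mu 0.
  right; exists (2 * n)%N; rewrite exprM expr2 -mulmxE.
  by have := single_eigenvalue_nilpotent Hmu; rewrite mu0 raddf0 subr0.
left; have : A *m A \in unitmx.
  have := unitmx_sub_scalarE (A *m A) 0; rewrite raddf0 subr0 => ->.
  by apply/negP => /Hmu mu0; rewrite -mu0 eqxx in mu_neq0.
by rewrite unitmx_mul => /andP [].
Qed.

Theorem proposition4p5 (n k : nat) (e : 'I_k -> 'M[algC]_n) :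
  anticommuting e -> irreducible_family e ->
  (forall i : 'I_k, e i \in unitmx \/ nilpotent_mx (e i)) /\
  exists lam : 'I_k -> algC,
    (forall (i : 'I_k) (a : algC),
        eigenvalue (e i) a -> a = lam i \/ a = - lam i) /\
    ((exists i j : 'I_k, i != j /\ e i \in unitmx /\ e j \in unitmx) ->
       ~~ odd n /\
       forall i : 'I_k, e i \in unitmx ->
         mup (lam i) (char_poly (e i)) = n./2).
Proof.
move=> ac irr.
have [mu Hmu] := fin_all_exists (fun i =>
  commuting_mx_single_eigenvalue irr (anticommuting_sqr_comm ac i)).
split=> [i|]; first exact: unitmx_or_nilpotent_of_sqr (Hmu i).
exists (fun i => sqrtC (mu i)); split=> [i|]; first exact: eigenvalue_sqrtC (Hmu i).
case=> i0 [j0 [ij0 [Ui0 Uj0]]].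
have tr0 i : e i \in unitmx -> \tr (e i) = 0.
  move=> Ui; have [i' ii' Ui'] : exists2 i', i != i' & e i' \in unitmx.
    by have [->|ii0] := eqVneq i i0; [exists j0 | exists i0].
  exact: mxtrace_anticomm_unit Ui' (ac _ _ ii').
have mup_half i : e i \in unitmx -> n = (mup (sqrtC (mu i)) (char_poly (e i))).*2.
  move=> Ui; apply: traceless_pm_spectrum_mup Ui (tr0 i Ui) _.
  exact: eigenvalue_sqrtC (Hmu i).
split; first by rewrite (mup_half i0 Ui0) odd_double.
by move=> i Ui; rewrite -[mup _ _]doubleK -(mup_half i Ui).
Qed.
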